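(* Let $X$ be a finite connected simplicial complex and $\delta$ a cellular perversity. (1) The left quadratic dual of the quadratic algebra $A(X,\delta)$ is isomorphic to $B(X,-\delta)$. (2) The left quadratic dual of $B(X,\delta)$ is isomorphic to $A(X,-\delta)$.
   Context: Simplices are open; $\Delta\leftrightarrow\Delta'$ means one is a face of the other. Cellular perversity: $\delta:\mathbb Z_{\ge0}\to\mathbb Z$, $\delta(0)=0$, bijective from each $\{0,\dots,k\}$ onto an interval $\{a,\dots,a+k\}$, $a\le0$ (then $-\delta$ is also one); $\delta(\Delta)=\delta(\dim\Delta)$. For a cellular perversity $\varepsilon$, the quiver $Q(X,\varepsilon)$ has vertices the simplices and an arrow $\Delta\to\Delta'$ whenever $\Delta\leftrightarrow\Delta'$ and $\varepsilon(\Delta)=\varepsilon(\Delta')+1$ (so $Q(X,-\delta)$ is $Q(X,\delta)$ with arrows reversed). In the path algebra over a field $\mathbb F$ (char $0$), products $xy$ mean path $y$ followed by $x$. $A(X,\varepsilon)$ is the quotient by the relations $\sum_{\Delta:\varepsilon(\Delta)=k,\ \Delta'\leftrightarrow\Delta\leftrightarrow\Delta''}a(\Delta,\Delta'')a(\Delta',\Delta)=0$ for all $\Delta',\Delta''$ with $\varepsilon(\Delta')=k+1$, $\varepsilon(\Delta'')=k-1$; $B(X,\varepsilon)$ is the quotient by $b(\Delta_1,\Delta'')b(\Delta',\Delta_1)=b(\Delta_2,\Delta'')b(\Delta',\Delta_2)$ whenever $\varepsilon(\Delta')=k+1$, $\varepsilon(\Delta_j)=k$, $\varepsilon(\Delta'')=k-1$,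 $\Delta'\leftrightarrow\Delta_j\leftrightarrow\Delta''$. Both are quadratic algebras over the semisimple algebra $k=\bigoplus_\Delta\mathbb F e(\Delta)$; the left quadratic dual of $T_k(V)/(R)$, $R\subseteq V\otimes_kV$, is $T_k(V^* )/(R^\perp)$ (in the sense of Beilinson–Ginzburg–Soergel). *)

From HB Require Import structures.
From mathcomp Require Import all_boot all_order all_algebra.
Set Implicit Arguments. Unset Strict Implicit. Unset Printing Implicit Defensive.
Import Order.TTheory GRing.Theory Num.Theory.
Local Open Scope ring_scope.

(* Quadratic algebras over k = (+)_{s : S} F e(s), presented by a quiver
   with at most one arrow between two vertices (arrow relation [arr]) and
   a set of quadratic relations.  Everything is graded: the degree-n part
   of the path algebra T_k(V) is the space of functions on the paths with
   n arrows; a path is recorded as the sequence of its n+1 vertices in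
   traversal order. *)
Section Quadratic.
Variables (F : fieldType) (S : finType).

Local Notation word n := {ffun 'I_n.+1 -> S}.
Local Notation deg n := {ffun word n -> F}.

Definition is_path (arr : rel S) (n : nat) (w : word n) : bool :=
  [forall i : 'I_n, arr (w (inord i)) (w (inord i.+1))].

Definition in_T (arr : rel S) (n : nat) (x : deg n) : Prop :=
  forall w : word n, ~~ is_path arr w -> x w = 0.

Definition subword (n : nat) (w : word n) (i m : nat) : word m :=
  [ffun k : 'I_m.+1 => w (inord (i + k))].

(* product x y in the path algebra: "path y followed by path x" *)
Definition qmul (m n : nat) (x : deg m) (y : deg n) : deg (m + n) :=
  [ffun w : word (m + n) => x (subword w n m) * y (subword w 0 n)].

Definition rev_word (n : nat) (w : word n) : word n :=
  [ffun k : 'I_n.+1 => w (rev_ord k)].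

(* quadratic data: quiver + generating set of the relation space R ⊆ V⊗_k V *)
Record qalg := QAlg { qarr : rel S; qrel : deg 2 -> Prop }.

(* generators u r v (v, then r, then u) of the degree-N part of the
   two-sided ideal (R) *)
Definition ideal_gen (Q : qalg) (N : nat) (x : deg N) : Prop :=
  exists (i j : nat) (u : deg i) (r : deg 2) (v : deg j),
    [/\ (j + 2 + i)%N = N, in_T (qarr Q) u, in_T (qarr Q) v, qrel Q r &
        forall w : word N,
          x w = u (subword w (j + 2) i) * r (subword w j 2) * v (subword w 0 j)].

Definition in_ideal (Q : qalg) (N : nat) (x : deg N) : Prop :=
  exists s : seq (deg N),
    (forall g, g \in s -> ideal_gen Q g) /\ x = \sum_(g <- s) g.

(* left quadratic dual T_k(V^* )/(R^perp): V^* has the reversed arrows, and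
   a 2-path of the reversed quiver pairs with the reversed 2-path of Q *)
Definition qdual (Q : qalg) : qalg :=
  QAlg (fun a b => qarr Q b a)
       (fun y => in_T (fun a b => qarr Q b a) y /\
                 forall r, qrel Q r -> \sum_(w : word 2) y (rev_word w) * r w = 0).

(* isomorphism of graded k-algebras T_k(V1)/(R1) ~= T_k(V2)/(R2),
   restricting to the identity on k (degree 0), given by linear maps
   f n on the degree-n parts of the path algebras inducing bijections of
   the degree-n quotients and compatible with products *)
Definition qiso (Q1 Q2 : qalg) : Prop :=
  exists f : forall n, deg n -> deg n,
  [/\ (forall n (a : F) (x y : deg n), f n [ffun w => a * x w + y w] = [ffun w => a * f n x w + f n y w]),
      (forall x : deg 0, f 0%N x = x),
      (forall n (x : deg n), in_T (qarr Q1) x -> in_T (qarr Q2) (f n x)),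
      (forall n (x : deg n), in_T (qarr Q1) x ->
        (in_ideal Q1 x <-> in_ideal Q2 (f n x))) &
      (forall n (y : deg n), in_T (qarr Q2) y ->
        exists2 x, in_T (qarr Q1) x & in_ideal Q2 (f n x - y)) /\
      (forall m n (x : deg m) (y : deg n), in_T (qarr Q1) x -> in_T (qarr Q1) y ->
        in_ideal Q2 (f (m + n)%N (qmul x y) - qmul (f m x) (f n y)))].

End Quadratic.

Notation word S n := {ffun 'I_n.+1 -> S}.
Notation deg F S n := {ffun word S n -> F}.

Section Complex.
Variable V : finType.

Definition simplicial_complex (X : {set {set V}}) : Prop :=
  set0 \notin X /\
  forall s t : {set V}, s \in X -> t \subset s -> t != set0 -> t \in X.

Definition connected_complex (X : {set {set V}}) : Prop :=
  forall u v : V, [set u] \in X -> [set v] \in X ->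
    connect [rel a b | [set a; b] \in X] u v.

Definition simplex (X : {set {set V}}) := {s : {set V} | s \in X}.

Definition sdim (X : {set {set V}}) (D : simplex X) : nat := (#|val D|).-1.

Definition face_rel (X : {set {set V}}) (D D' : simplex X) : bool :=
  (val D \proper val D') || (val D' \proper val D).

Definition Qarr (X : {set {set V}}) (e : nat -> int) : rel (simplex X) :=
  fun D D' => face_rel D D' && (e (sdim D) == e (sdim D') + 1).

Definition word3 (X : {set {set V}}) (a b c : simplex X) : word (simplex X) 2 :=
  [ffun k : 'I_3 => nth a [:: a; b; c] k].

(* relations of A(X,e): for D', D'' with e(D') = k+1, e(D'') = k-1,
   sum over D with e(D) = k and D' <-> D <-> D'' of a(D,D'') a(D',D) *)
Definition A_rel (F : fieldType) (X : {set {set V}}) (e : nat -> int)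
    (r : {ffun word (simplex X) 2 -> F}) : Prop :=
  exists (a c : simplex X) (k : int),
    [/\ e (sdim a) = k + 1, e (sdim c) = k - 1 &
        forall w : word (simplex X) 2,
          r w = if [&& w ord0 == a, w (@ord_max 2) == c,
                      e (sdim (w (inord 1))) == k,
                      face_rel a (w (inord 1)) & face_rel (w (inord 1)) c]
                then 1 else 0].

(* relations of B(X,e): b(D1,D'')b(D',D1) - b(D2,D'')b(D',D2) *)
Definition B_rel (F : fieldType) (X : {set {set V}}) (e : nat -> int)
    (r : {ffun word (simplex X) 2 -> F}) : Prop :=
  exists (a b1 b2 c : simplex X) (k : int),
    [/\ e (sdim a) = k + 1, e (sdim b1) = k /\ e (sdim b2) = k, e (sdim c) = k - 1,
        [&& face_rel a b1, face_rel b1 c, face_rel a b2 & face_rel b2 c] &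
        forall w, r w = (w == word3 a b1 c)%:R - (w == word3 a b2 c)%:R].

Definition A_alg (F : fieldType) (X : {set {set V}}) (e : nat -> int)
  : qalg F (simplex X) := QAlg (Qarr e) (@A_rel F X e).

Definition B_alg (F : fieldType) (X : {set {set V}}) (e : nat -> int)
  : qalg F (simplex X) := QAlg (Qarr e) (@B_rel F X e).

End Complex.

Definition cellular_perversity (d : nat -> int) : Prop :=
  d 0%N = 0 /\
  forall k : nat, exists a : int, a <= 0 /\
    perm_eq [seq d i | i <- iota 0 k.+1] [seq a + (i%:Z) | i <- iota 0 k.+1].

From HB Require Import structures.
From mathcomp Require Import all_boot all_order all_algebra.
From mathcomp Require Import zify.
Set Implicit Arguments. Unset Strict Implicit. Unset Printing Implicit Defensive.
Import GRing.Theory.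
Local Open Scope ring_scope.

(* Reversing arrows identifies Q(X,δ)^op with Q(X,-δ), and the pairing of the
   dual matches a 2-path of Q(X,-δ) with its reverse in Q(X,δ).  Group the
   2-paths of Q(X,-δ) into fibres according to their end points.  Through the
   pairing, the relations of A(X,δ) are the indicator functions of the fibres,
   while the relations of B(X,-δ) are the differences of two paths in a common
   fibre (and symmetrically with A and B exchanged).  On functions supported on
   2-paths these two spans are orthogonal complements of each other: a function
   orthogonal to every fibre indicator is the combination of the differences
   w - rep(w), rep choosing a point in each fibre, and a function orthogonal to
   all differences is constant on fibres.  Hence each dual has the same relation
   space, so the same ideal, as the claimed algebra, and the identity is the
   isomorphism. *)

Section Fibres.
Variables (F : fieldType) (T : finType) (E : eqType) (P : pred T) (pi : T -> E).

Definition fibre_ind (x : E) : {ffun T -> F} := [ffun t => (P t && (pi t == x))%:R].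

Definition point_diff (s t : T) : {ffun T -> F} := [ffun u => (u == s)%:R - (u == t)%:R].

Definition fibre_rep (t : T) : T := odflt t [pick u | P u && (pi u == pi t)].

Lemma fibre_repP t : P t -> P (fibre_rep t) /\ pi (fibre_rep t) = pi t.
Proof. by rewrite /fibre_rep; case: pickP => [u /andP [Pu /eqP]|]. Qed.

Lemma fibre_rep_eq s t : P s -> pi s = pi t -> fibre_rep s = fibre_rep t.
Proof.
move=> Ps Est; rewrite /fibre_rep Est; case: pickP => [//|none].
by move: (none s); rewrite Ps Est eqxx.
Qed.

Lemma fibre_rep_id t : P t -> fibre_rep (fibre_rep t) = fibre_rep t.
Proof. by move=> Pt; have [Pr Er] := fibre_repP Pt; apply: fibre_rep_eq. Qed.

Lemma fibre_ind_support x u : ~~ P u -> fibre_ind x u = 0.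
Proof. by rewrite ffunE => /negbTE ->. Qed.

Lemma fibre_ind_eq x s t : P s -> P t -> pi s = pi t -> fibre_ind x s = fibre_ind x t.
Proof. by move=> Ps Pt Est; rewrite !ffunE Ps Pt Est. Qed.

Lemma point_diff_support s t u : P s -> P t -> ~~ P u -> point_diff s t u = 0.
Proof.
move=> Ps Pt Pu; rewrite ffunE.
by case: eqP Pu => [-> /negP //|_]; case: eqP => [-> /negP //|_]; rewrite subrr.
Qed.

Lemma sumr_indicator (Q c : pred T) (f : T -> F) :
  \sum_(t | Q t) f t * (c t)%:R = \sum_(t | Q t && c t) f t.
Proof. by rewrite big_mkcondr; apply: eq_bigr => t _; case: (c t); rewrite ?mulr1 ?mulr0. Qed.

Lemma sum_point_diff (f : T -> F) s t : \sum_u f u * point_diff s t u = f s - f t.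
Proof.
under eq_bigr => u _ do rewrite ffunE mulrBr.
by rewrite sumrB !sumr_indicator (big_pred1 s) // (big_pred1 t).
Qed.

Lemma sumr_support (y : T -> F) (Q : pred T) :
  (forall t, ~~ P t -> y t = 0) -> \sum_(t | P t && Q t) y t = \sum_(t | Q t) y t.
Proof.
move=> y0; rewrite [RHS](bigID P) /= [X in _ + X]big1 ?addr0 => [|t /andP [_ /y0] //].
by apply: eq_bigl => t; rewrite andbC.
Qed.

Lemma fibre_sum0_diff (y : {ffun T -> F}) :
  (forall t, ~~ P t -> y t = 0) ->
  (forall t, P t -> \sum_(u | P u && (pi u == pi t)) y u = 0) ->
  forall v, y v = \sum_(t | P t) y t * point_diff t (fibre_rep t) v.
Proof.
move=> y0 ysum v; under eq_bigr => t _ do rewrite ffunE mulrBr.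
rewrite sumrB !sumr_indicator sumr_support // (big_pred1 v) => [|t]; last exact: eq_sym.
rewrite [X in _ - X](_ : _ = 0) ?subr0 //.
have [/andP [Pv /eqP vrep] | notrep] := boolP (P v && (fibre_rep v == v)).
  rewrite -[RHS](ysum v Pv); apply: eq_bigl => t.
  apply/andP/andP => [[Pt /eqP ->] | [Pt /eqP Etv]]; first by have [_ ->] := fibre_repP Pt.
  by rewrite -vrep (fibre_rep_eq Pt Etv).
rewrite big_pred0 // => t; apply/andP => [[Pt /eqP Ev]].
by case/negP: notrep; have [Pr _] := fibre_repP Pt; rewrite Ev Pr (fibre_rep_id Pt) eqxx.
Qed.

Lemma fibre_const_ind (y : {ffun T -> F}) :
  (forall t, ~~ P t -> y t = 0) ->
  (forall s t, P s -> P t -> pi s = pi t -> y s = y t) ->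
  forall v, y v = \sum_(t | P t && (fibre_rep t == t)) y t * fibre_ind (pi t) v.
Proof.
move=> y0 yconst v; under eq_bigr => t _ do rewrite ffunE.
rewrite sumr_indicator; have [Pv | nPv] := boolP (P v); last first.
  by rewrite y0 // big_pred0 // => t; rewrite andbF.
have [Pr Er] := fibre_repP Pv.
rewrite (big_pred1 (fibre_rep v)) => [|t]; first by rewrite (yconst _ _ Pv Pr).
apply/idP/eqP => [/and3P [/andP [Pt /eqP rep_t] _ /eqP Evt] | ->].
  by rewrite -rep_t; apply: fibre_rep_eq Pt (esym Evt).
by rewrite Pr fibre_rep_id // Er !eqxx.
Qed.

End Fibres.

Section Presentations.
Variables (F : fieldType) (S : finType).

Definition in_span (R : deg F S 2 -> Prop) (r : deg F S 2) : Prop :=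
  exists s : seq (F * deg F S 2),
    (forall p, p \in s -> R p.2) /\ forall w, r w = \sum_(p <- s) p.1 * p.2 w.

Lemma in_span_rel R r : R r -> in_span R r.
Proof.
move=> Rr; exists [:: (1, r)]; split=> [p|w]; last by rewrite big_seq1 mul1r.
by rewrite inE => /eqP ->.
Qed.

Lemma in_span_sum R (I : finType) (Q : pred I) (c : I -> F) (g : I -> deg F S 2) (r : deg F S 2) :
  (forall i, Q i -> R (g i)) -> (forall w, r w = \sum_(i | Q i) c i * g i w) ->
  in_span R r.
Proof.
move=> Rg rE; exists [seq (c i, g i) | i <- enum Q]; split=> [p|w].
  by case/mapP=> i; rewrite mem_enum => /Rg Ri ->.
by rewrite big_map big_enum rE.
Qed.

Lemma in_ideal0 (Q : qalg F S) N : in_ideal Q (0 : deg F S N).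
Proof. by exists [::]; rewrite big_nil. Qed.

Lemma in_idealD (Q : qalg F S) N (x y : deg F S N) :
  in_ideal Q x -> in_ideal Q y -> in_ideal Q (x + y).
Proof.
move=> [s [Hs ->]] [t [Ht ->]]; exists (s ++ t); split; last by rewrite big_cat.
by move=> g; rewrite mem_cat => /orP [/Hs|/Ht].
Qed.

Lemma in_ideal_sum (Q : qalg F S) N (I : eqType) (s : seq I) (G : I -> deg F S N) :
  (forall i, i \in s -> in_ideal Q (G i)) -> in_ideal Q (\sum_(i <- s) G i).
Proof.
elim: s => [|i s IH] H; first by rewrite big_nil; apply: in_ideal0.
rewrite big_cons; apply: in_idealD; first by apply: H; rewrite inE eqxx.
by apply: IH => j js; apply: H; rewrite inE js orbT.
Qed.

Lemma ideal_gen_in_ideal (Q : qalg F S) N (g : deg F S N) :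
  ideal_gen Q g -> in_ideal Q g.
Proof. by move=> Hg; exists [:: g]; rewrite big_seq1; split=> // h /[1!inE] /eqP ->. Qed.

Lemma in_T_eq (arr1 arr2 : rel S) N (x : deg F S N) :
  arr1 =2 arr2 -> in_T arr1 x -> in_T arr2 x.
Proof.
move=> E Hx w Hw; apply: Hx; rewrite /is_path.
by under eq_forallb => i do rewrite E.
Qed.

Lemma in_ideal_span (Q1 Q2 : qalg F S) N (x : deg F S N) :
  qarr Q1 =2 qarr Q2 -> (forall r, qrel Q1 r -> in_span (qrel Q2) r) ->
  in_ideal Q1 x -> in_ideal Q2 x.
Proof.
move=> E span [s [Hs ->]]; apply: in_ideal_sum => g /Hs [i [j [u [r [v [HN Hu Hv Hr Hg]]]]]].
have [t [Ht rE]] := span r Hr.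
have -> : g = \sum_(p <- t) [ffun w : word S N =>
    (p.1 * u (subword w (j + 2) i)) * p.2 (subword w j 2) * v (subword w 0 j)].
  apply/ffunP => w; rewrite sum_ffunE Hg rE mulr_sumr mulr_suml.
  by apply: eq_bigr => p _; rewrite ffunE mulrCA !mulrA.
apply: in_ideal_sum => p /Ht Rp; apply: ideal_gen_in_ideal.
exists i, j, [ffun z => p.1 * u z], p.2, v; split=> //.
- by move=> w /(in_T_eq E Hu) uw; rewrite ffunE uw mulr0.
- exact: in_T_eq E Hv.
- by move=> w; rewrite !ffunE.
Qed.

Lemma qiso_of_span (Q1 Q2 : qalg F S) :
  qarr Q1 =2 qarr Q2 ->
  (forall r, qrel Q1 r -> in_span (qrel Q2) r) ->
  (forall r, qrel Q2 r -> in_span (qrel Q1) r) ->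
  qiso Q1 Q2.
Proof.
move=> E span12 span21; exists (fun n x => x); split=> //.
- by move=> n x; apply: in_T_eq.
- by move=> n x _; split; apply: in_ideal_span.
- split=> [n y Hy | m n x y _ _]; last by rewrite subrr; apply: in_ideal0.
  exists y; last by rewrite subrr; apply: in_ideal0.
  by apply: in_T_eq Hy => a b; rewrite E.
Qed.

End Presentations.

Section Complex.
Variables (F : fieldType) (V : finType) (X : {set {set V}}).
Local Notation S := (simplex X).
Local Notation W := (word S 2).

Definition ends (w : W) : S * S := (w ord0, w ord_max).

Lemma word3_0 (a b c : S) : word3 a b c ord0 = a. Proof. by rewrite ffunE. Qed.
Lemma word3_1 (a b c : S) : word3 a b c (inord 1) = b. Proof. by rewrite ffunE inordK. Qed.
Lemma word3_2 (a b c : S) : word3 a b c ord_max = c. Proof. by rewrite ffunE. Qed.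

Lemma word3_eta (w : W) : w = word3 (w ord0) (w (inord 1)) (w ord_max).
Proof.
apply/ffunP => i; rewrite ffunE; case: i => [[|[|[|//]]] Hi] /=; congr (w _); apply: val_inj => //=.
by rewrite inordK.
Qed.

Lemma rev_word3 (a b c : S) : rev_word (word3 a b c) = word3 c b a.
Proof. by apply/ffunP => i; rewrite !ffunE; case: i => [[|[|[|//]]] Hi]. Qed.

Lemma rev_wordK : involutive (@rev_word S 2).
Proof. by move=> w; apply/ffunP => i; rewrite !ffunE rev_ordK. Qed.

Lemma ends_rev (w : W) : ends (rev_word w) = ((ends w).2, (ends w).1).
Proof. by rewrite [w in rev_word w]word3_eta rev_word3 /ends word3_0 word3_2. Qed.

Lemma sum_rev_word (f g : W -> F) :
  \sum_w f (rev_word w) * g w = \sum_w f w * g (rev_word w).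
Proof. by rewrite (reindex_inj (inv_inj rev_wordK)); apply: eq_bigr => w _; rewrite rev_wordK. Qed.

Lemma is_path2 (arr : rel S) (w : W) :
  is_path arr w = arr (w ord0) (w (inord 1)) && arr (w (inord 1)) (w ord_max).
Proof.
have e0 : (inord 0 : 'I_3) = ord0 by apply: val_inj; rewrite /= inordK.
have e2 : (inord 2 : 'I_3) = ord_max by apply: val_inj; rewrite /= inordK.
apply/forallP/andP => [H | [H1 H2] i].
  by split; [move: (H ord0) | move: (H ord_max)]; rewrite /= ?e0 ?e2.
by case: i => [[|[|//]] Hi] /=; rewrite ?e0 ?e2.
Qed.

Lemma face_relC (a b : S) : face_rel a b = face_rel b a.
Proof. by rewrite /face_rel orbC. Qed.

Section Perversity.
Variable e : nat -> int.
Local Notation P := (@is_path S (Qarr e) 2).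
Local Notation pv a := (e (sdim a)).

Lemma is_path_word3 (a b c : S) :
  P (word3 a b c) = [&& face_rel a b, pv a == pv b + 1, face_rel b c & pv b == pv c + 1].
Proof. by rewrite is_path2 word3_0 word3_1 word3_2 /Qarr -!andbA. Qed.

Lemma path_perversity (w : W) :
  P w -> pv (w ord0) = pv (w (inord 1)) + 1 /\ pv (w (inord 1)) = pv (w ord_max) + 1.
Proof. by rewrite is_path2 => /andP [/andP [_ /eqP ->] /andP [_ /eqP ->]]. Qed.

Lemma path_perversity2 (w : W) : P w -> pv (w ord0) = pv (w ord_max) + 2.
Proof. by case/path_perversity=> -> ->; rewrite -addrA. Qed.

Lemma A_relP (r : deg F S 2) :
  A_rel e r <-> exists a c, pv a = pv c + 2 /\ r = fibre_ind F P ends (a, c).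
Proof.
have fibreE (a c : S) (k : int) (w : W) : pv a = k + 1 -> pv c = k - 1 ->
    [&& w ord0 == a, w ord_max == c, pv (w (inord 1)) == k,
        face_rel a (w (inord 1)) & face_rel (w (inord 1)) c] = P w && (ends w == (a, c)).
  move=> ha hc; rewrite xpair_eqE is_path2 /Qarr.
  case: eqP => [->|] /=; last by rewrite !andbF.
  case: eqP => [->|] /=; last by rewrite !andbF.
  set b := w (inord 1).
  have -> : (pv a == pv b + 1) = (pv b == k) by apply/eqP/eqP; lia.
  have -> : (pv b == pv c + 1) = (pv b == k) by apply/eqP/eqP; lia.
  by case: (pv b == k); case: (face_rel a b); case: (face_rel b c).
split=> [[a [c [k [ha hc rE]]]] | [a [c [hac ->]]]].
  exists a, c; split; first lia.
  by apply/ffunP => w; rewrite rE ffunE (fibreE _ _ k) //; case: ifP.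
exists a, c, (pv a - 1); split; [by rewrite subrK | lia |].
by move=> w; rewrite ffunE (fibreE _ _ (pv a - 1)) ?subrK //; [case: ifP | lia].
Qed.

Lemma B_relP (r : deg F S 2) :
  B_rel e r <-> exists s t, [/\ P s, P t, ends s = ends t & r = point_diff F s t].
Proof.
split=> [[a [b1 [b2 [c [k [ha [hb1 hb2] hc /and4P [f1 f2 f3 f4] rE]]]]]] | [s [t [Ps Pt Est ->]]]].
  exists (word3 a b1 c), (word3 a b2 c); split.
  - by rewrite is_path_word3 f1 f2 /=; apply/andP; split; apply/eqP; lia.
  - by rewrite is_path_word3 f3 f4 /=; apply/andP; split; apply/eqP; lia.
  - by rewrite /ends !word3_0 !word3_2.
  - by apply/ffunP => w; rewrite rE ffunE.
have [E0 E2] : s ord0 = t ord0 /\ s ord_max = t ord_max by case: Est => -> ->.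
have [hs1 hs2] := path_perversity Ps; have [ht1 ht2] := path_perversity Pt.
rewrite -E0 in ht1; rewrite -E2 in ht2.
move: Ps Pt; rewrite !is_path2 /Qarr -E0 -E2.
move=> /andP [/andP [f1 _] /andP [f2 _]] /andP [/andP [f3 _] /andP [f4 _]].
exists (s ord0), (s (inord 1)), (t (inord 1)), (s ord_max), (pv (s ord0) - 1); split.
- by rewrite subrK.
- by split; [rewrite hs1 | rewrite ht1]; rewrite addrK.
- by rewrite hs1 hs2 !addrK.
- by rewrite f1 f2 f3 f4.
- have tE : t = word3 (s ord0) (t (inord 1)) (s ord_max) by rewrite E0 E2 -word3_eta.
  by move=> w; rewrite ffunE -word3_eta -tE.
Qed.

End Perversity.

Section Duality.
Variable d : nat -> int.
Local Notation nd := (fun n => - d n).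
Local Notation Pd := (@is_path S (Qarr d) 2).
Local Notation Pn := (@is_path S (Qarr nd) 2).

Lemma Qarr_opp (a b : S) : Qarr d b a = Qarr nd a b.
Proof. by rewrite /Qarr face_relC; congr (_ && _); apply/eqP/eqP => /=; lia. Qed.

Lemma is_path_rev (w : W) : Pd (rev_word w) = Pn w.
Proof.
rewrite !is_path2 [w in rev_word w]word3_eta rev_word3 word3_0 word3_1 word3_2.
by rewrite !Qarr_opp andbC.
Qed.

Lemma fibre_ind_rev (a c : S) (w : W) :
  fibre_ind F Pd ends (c, a) (rev_word w) = fibre_ind F Pn ends (a, c) w.
Proof. by rewrite !ffunE is_path_rev ends_rev /ends !xpair_eqE /= [(_ == c) && _]andbC. Qed.

Lemma dual_A_rel_in_span (y : deg F S 2) :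
  qrel (qdual (A_alg F X d)) y -> in_span (qrel (B_alg F X nd)) y.
Proof.
move=> [yT yA]; have y0 := in_T_eq Qarr_opp yT.
apply: (in_span_sum (Q := Pn) (c := y) (g := fun t => point_diff F t (fibre_rep Pn ends t))).
  move=> t Pt; apply/B_relP; exists t, (fibre_rep Pn ends t).
  by have [Pr Er] := fibre_repP ends Pt; split.
apply: fibre_sum0_diff => // t Pt.
have /yA : A_rel d (fibre_ind F Pd ends (t ord_max, t ord0)).
  apply/A_relP; exists (t ord_max), (t ord0); split=> //.
  by apply: oppr_inj; rewrite opprD (path_perversity2 Pt) addrK.
rewrite sum_rev_word; under eq_bigr => w _ do rewrite fibre_ind_rev ffunE.
by rewrite sumr_indicator.
Qed.

Lemma B_rel_dual_A (r : deg F S 2) :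
  qrel (B_alg F X nd) r -> qrel (qdual (A_alg F X d)) r.
Proof.
case/B_relP => s [t [Ps Pt Est ->]]; split.
  apply: (in_T_eq (arr1 := Qarr nd)) => [a b | w]; first by rewrite /= Qarr_opp.
  exact: point_diff_support.
move=> r' /A_relP [a [c [_ ->]]].
rewrite sum_rev_word; under eq_bigr => w _ do rewrite mulrC.
rewrite sum_point_diff; apply/eqP; rewrite subr_eq0; apply/eqP.
by apply: fibre_ind_eq; rewrite ?is_path_rev ?ends_rev ?Est.
Qed.

Lemma dual_B_rel_in_span (y : deg F S 2) :
  qrel (qdual (B_alg F X d)) y -> in_span (qrel (A_alg F X nd)) y.
Proof.
move=> [yT yB]; have y0 := in_T_eq Qarr_opp yT.
apply: (in_span_sum (Q := fun t => Pn t && (fibre_rep Pn ends t == t)) (c := y)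
                    (g := fun t => fibre_ind F Pn ends (ends t))).
  move=> t /andP [Pt _]; apply/A_relP; exists (t ord0), (t ord_max); split=> //.
  exact: path_perversity2 Pt.
apply: fibre_const_ind => // s t Ps Pt Est.
have /yB : B_rel d (point_diff F (rev_word s) (rev_word t)).
  by apply/B_relP; exists (rev_word s), (rev_word t); split; rewrite ?is_path_rev ?ends_rev ?Est.
by rewrite sum_point_diff !rev_wordK => /subr0_eq.
Qed.

Lemma A_rel_dual_B (r : deg F S 2) :
  qrel (A_alg F X nd) r -> qrel (qdual (B_alg F X d)) r.
Proof.
case/A_relP => a [c [_ ->]]; split.
  apply: (in_T_eq (arr1 := Qarr nd)) => [a' b | w]; first by rewrite /= Qarr_opp.
  exact: fibre_ind_support.
move=> r' /B_relP [s [t [Ps Pt Est ->]]].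
rewrite sum_point_diff; apply/eqP; rewrite subr_eq0; apply/eqP.
by apply: fibre_ind_eq; rewrite -?is_path_rev ?rev_wordK ?ends_rev ?Est.
Qed.

End Duality.
End Complex.

Theorem lemma4p2p3 (F : fieldType) (hF : [pchar F] =i pred0)
  (V : finType) (X : {set {set V}})
  (hX : simplicial_complex X) (hconn : connected_complex X)
  (d : nat -> int) (hd : cellular_perversity d) :
  qiso (qdual (A_alg F X d)) (B_alg F X (fun n => - d n)) /\
  qiso (qdual (B_alg F X d)) (A_alg F X (fun n => - d n)).
Proof.
split; apply: qiso_of_span.
- exact: Qarr_opp.
- exact: dual_A_rel_in_span.
- by move=> r /B_rel_dual_A /in_span_rel.
- exact: Qarr_opp.
- exact: dual_B_rel_in_span.
- by move=> r /A_rel_dual_B /in_span_rel.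
Qed.
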